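(* Let $G=(V,E)$ be a simple biconnected graph and let $w$ be a vertex such that the set $F$ of edges of $G-w$ is a flacet of the graphic matroid $\mathcal{M}(G)$. Then $F$ is $k$-level if and only if $\deg(w)=k$.
   Context: The graphic matroid $\mathcal{M}(G)$ has ground set $E$ and bases the spanning forests (spanning trees, for connected $G$). A flacet of a matroid $\mathcal{M}$ on $E$ is a flat $\emptyset\neq S\subsetneq E$ (i.e. $\operatorname{rk}(S)<\operatorname{rk}(S\cup e)$ for all $e\notin S$) such that the restriction $\mathcal{M}|_S$ and the contraction $\mathcal{M}/S$ are connected matroids. A flacet $F$ is $k$-level if the function $\ell_F(x)=\sum_{e\in F}x_e$ takes exactly $k$ distinct values on the base configuration $\{\mathbf{1}_B: B \text{ a basis}\}\subset\mathbb{R}^E$. *)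

From mathcomp Require Import all_boot.
Set Implicit Arguments. Unset Strict Implicit. Unset Printing Implicit Defensive.

Section Graphic.
Variables (T : finType) (e : rel T).

Definition simple_graph := symmetric e /\ irreflexive e.

Definition edges : {set {set T}} := [set [set x; y] | x in T, y in T & e x y].

Definition induced_connected (A : {set T}) : Prop :=
  forall x y, x \in A -> y \in A ->
    connect (fun u v => [&& e u v, u \in A & v \in A]) x y.

Definition graph_connected : Prop := induced_connected setT.

Definition biconnected : Prop :=
  graph_connected /\ forall v : T, induced_connected (setT :\ v).

Definition degree (w : T) : nat := #|[set v | e w v]|.

Definition edges_avoiding (w : T) : {set {set T}} := [set f in edges | w \notin f].

Definition adj_in (S : {set {set T}}) : rel T := fun x y => [set x; y] \in S.
Definition n_components (S : {set {set T}}) : nat :=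
  #|[set [set y | connect (adj_in (S :&: edges)) x y] | x : T]|.
Definition grank (S : {set {set T}}) : nat := #|T| - n_components S.

Definition is_basis (B : {set {set T}}) : bool :=
  (B \subset edges) && (#|B| == grank B) && (grank B == grank edges).

Definition is_flat (S : {set {set T}}) : Prop :=
  S \subset edges /\
  forall f, f \in edges -> f \notin S -> grank S < grank (f |: S).

(* A matroid on ground set X with rank function r is connected iff it has no
   nontrivial separator: r A + r (X \ A) > r X for every nonempty proper A. *)
Definition matroid_connected (X : {set {set T}}) (r : {set {set T}} -> nat) : Prop :=
  forall A : {set {set T}}, A \subset X -> A != set0 -> A != X -> r X < r A + r (X :\: A).

(* Restriction M|S: ground S, rank grank.  Contraction M/S: ground E \ S,
   rank X |-> grank (X :|: S) - grank S. *)
Definition restriction_connected (S : {set {set T}}) : Prop :=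
  matroid_connected S grank.
Definition contraction_connected (S : {set {set T}}) : Prop :=
  matroid_connected (edges :\: S) (fun X => grank (X :|: S) - grank S).

Definition is_flacet (S : {set {set T}}) : Prop :=
  [/\ S != set0, S \proper edges, is_flat S,
      restriction_connected S & contraction_connected S].

(* Number of distinct values of l_F(1_B) = |B ∩ F| over bases B. *)
Definition num_levels (F : {set {set T}}) : nat :=
  size (undup [seq #|B :&: F| | B <- enum is_basis]).

Definition k_level (F : {set {set T}}) (k : nat) : Prop := num_levels F = k.

End Graphic.

From mathcomp Require Import all_boot zify.

(* A basis of M(G) is a spanning tree B, and B :&: F is B minus its edges at w, so
   l_F(1_B) = |V| - 1 - d_B where d_B is the number of edges of B at w.  As B is
   connected and w is not the only vertex, 1 <= d_B <= deg w.  Conversely, any d >= 1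
   edges at w form a forest which, because G - w is connected, extends by edges of
   G - w alone to a spanning tree.  Hence l_F takes exactly the deg w values
   |V| - 1 - d, 1 <= d <= deg w. *)

Set Implicit Arguments. Unset Strict Implicit. Unset Printing Implicit Defensive.

Section Components.
Variable T : finType.
Implicit Types (r : rel T) (a b x y z : T).

Definition comp r a : {set T} := [set z | connect r a z].
Definition ncomp r : nat := #|[set comp r a | a : T]|.
Definition add_edge r x y : rel T :=
  [rel u v | [|| r u v, (u == x) && (v == y) | (u == y) && (v == x)]].

Lemma mem_comp r a b : (b \in comp r a) = connect r a b.
Proof. by rewrite inE. Qed.

Lemma eq_ncomp r r' : r =2 r' -> ncomp r = ncomp r'.
Proof.
move=> rr'; have comp_eq a : comp r a = comp r' a.
  by apply/setP => z; rewrite !inE (eq_connect rr').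
by rewrite /ncomp (eq_imset _ comp_eq).
Qed.

Lemma ncomp_rel0 r : (forall u v, ~~ r u v) -> ncomp r = #|T|.
Proof.
move=> r0; have comp1 a : comp r a = [set a].
  apply/setP => z; rewrite !inE; apply/idP/eqP => [|->]; last exact: connect0.
  case/connectP=> [[_ -> //|c p /= /andP [rac _]]].
  by rewrite (negbTE (r0 a c)) in rac.
by rewrite /ncomp (eq_imset _ comp1) card_imset ?cardsT //; apply: set1_inj.
Qed.

Lemma ncomp1P r x0 : reflect (forall a b, connect r a b) (ncomp r == 1).
Proof.
apply: (iffP idP) => [/cards1P [C0 KC0] a b | rall].
  have compC0 c : comp r c = C0 by apply/set1P; rewrite -KC0 imset_f.
  by have := connect0 r b; rewrite -inE -/(comp r b) compC0 -(compC0 a) inE.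
apply/cards1P; exists setT; apply/setP => C; rewrite inE.
apply/imsetP/eqP => [[a _ ->]|->]; first by apply/setP => z; rewrite !inE rall.
by exists x0 => //; apply/setP => z; rewrite !inE rall.
Qed.

Section AddEdge.
Variables (r : rel T) (x y : T).
Hypothesis rsym : symmetric r.

Let csym := sym_connect_sym rsym.

Lemma add_edge_sym : symmetric (add_edge r x y).
Proof.
move=> u v; rewrite /add_edge /= rsym; congr (_ || _).
by rewrite orbC (andbC (u == y)) (andbC (u == x)).
Qed.

Let Cxy := comp r x :|: comp r y.

Lemma comp_connect a b : connect r a b -> comp r a = comp r b.
Proof. by move=> ab; apply/setP => z; rewrite !mem_comp (same_connect csym ab). Qed.

Lemma closed_Cxy : closed r Cxy.
Proof.
apply: (intro_closed csym) => u v ruv; rewrite !inE.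
by case/orP=> cu; apply/orP; [left|right]; apply: connect_trans cu (connect1 ruv).
Qed.

Lemma connect_add_edge a b :
  connect (add_edge r x y) a b = connect r a b || (a \in Cxy) && (b \in Cxy).
Proof.
have memCxy := closed_connect closed_Cxy.
have xCxy : x \in Cxy by rewrite !inE connect0.
have yCxy : y \in Cxy by rewrite !inE connect0 orbT.
apply/idP/idP.
  have r'sym := sym_connect_sym add_edge_sym.
  pose P := [pred c | connect r a c || (a \in Cxy) && (c \in Cxy)].
  have clP : closed (add_edge r x y) P.
    apply: (intro_closed r'sym) => u v.
    case/or3P=> [ruv | /andP [/eqP-> /eqP->] | /andP [/eqP-> /eqP->]];
      rewrite [_ \in P]inE [_ \in P]inE /=.
    - case/orP => [au | /andP [-> uC]]; first by rewrite (connect_trans au (connect1 ruv)).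
      by rewrite -(memCxy _ _ (connect1 ruv)) uC orbT.
    - by case/orP => [/memCxy -> | /andP [-> _]]; rewrite ?xCxy yCxy orbT.
    - by case/orP => [/memCxy -> | /andP [-> _]]; rewrite ?yCxy xCxy orbT.
  by move/(closed_connect clP); rewrite [a \in P]inE connect0 => /esym.
have sub : subrel r (connect (add_edge r x y)).
  by move=> u v ruv; apply: connect1; rewrite /add_edge /= ruv.
have x_to c : c \in Cxy -> connect (add_edge r x y) x c.
  rewrite !inE => /orP [xc | yc]; first exact: connect_sub xc.
  apply: connect_trans (connect_sub sub yc).
  by apply: connect1; rewrite /add_edge /= !eqxx orbT.
case/orP => [/(connect_sub sub) // | /andP [aC bC]].
apply: connect_trans (x_to _ bC).
by rewrite (sym_connect_sym add_edge_sym) x_to.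
Qed.

Lemma comp_add_edge a :
  comp (add_edge r x y) a = if a \in Cxy then Cxy else comp r a.
Proof.
apply/setP => z; rewrite mem_comp connect_add_edge.
case: ifP => aC; rewrite ?andbF ?orbF ?mem_comp // andTb orb_idl //.
by move/(closed_connect closed_Cxy) <-.
Qed.

Hypothesis nxy : ~~ connect r x y.

Lemma ncomp_add_edge : ncomp (add_edge r x y) + 1 = ncomp r.
Proof.
set K := [set comp r a | a : T]; set Cx := comp r x; set Cy := comp r y.
have in_comp a : a \in comp r a by rewrite mem_comp connect0.
have CxK : Cx \in K by apply: imset_f.
have CyK : Cy \in K by apply: imset_f.
have CxCy : Cx != Cy.
  by apply: contra nxy => /eqP CxE; rewrite csym -mem_comp -/Cy -CxE.
have CxyK : Cxy \notin K.
  apply/imsetP => -[a _ CxyE]; move/negP: nxy; apply.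
  have ax : connect r a x by rewrite -mem_comp -CxyE in_setU in_comp.
  have ay : connect r a y by rewrite -mem_comp -CxyE in_setU in_comp orbT.
  by rewrite csym in ax; apply: connect_trans ax ay.
have imE : [set comp (add_edge r x y) a | a : T] = Cxy |: (K :\: [set Cx; Cy]).
  apply/setP => C; rewrite in_setU1 in_setD in_set2; apply/imsetP/idP => [[a _ ->]|].
    rewrite comp_add_edge; case: ifPn => aC; first by rewrite eqxx.
    rewrite imset_f // andbT; apply/orP; right; apply/norP.
    by split; apply: contra aC => /eqP CaE; rewrite in_setU -/Cx -/Cy -CaE in_comp ?orbT.
  case/orP => [/eqP -> | /andP [/norP [CCx CCy] /imsetP [a _ CE]]].
    by exists x => //; rewrite comp_add_edge in_setU in_comp.
  exists a => //; rewrite comp_add_edge in_setU !mem_comp.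
  by case: ifPn => // /orP [] /comp_connect CaE; rewrite CE -CaE eqxx ?andbF in CCx CCy.
have sub2 : [set Cx; Cy] \subset K by rewrite subUset !sub1set CxK CyK.
rewrite /ncomp imE cardsU1 in_setD (negbTE CxyK) andbF cardsD (setIidPr sub2) cards2 CxCy.
have := subset_leq_card sub2; rewrite cards2 CxCy -/K; lia.
Qed.

End AddEdge.
End Components.

Lemma set2_inj (T : finType) (w : T) : injective (fun v => [set w; v]).
Proof.
move=> u v /= uvE.
have : v \in [set w; u] by rewrite uvE set22.
have : u \in [set w; v] by rewrite -uvE set22.
by rewrite !in_set2 => /orP [/eqP -> | /eqP //] /orP [/eqP -> | /eqP ->].
Qed.

Lemma set2_eqE (T : finType) (u v x y : T) : x != y ->
  ([set u; v] == [set x; y]) = (u == x) && (v == y) || (u == y) && (v == x).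
Proof.
move=> xy; apply/eqP/idP => [uvE | /orP [] /andP [/eqP-> /eqP->] //]; last exact: setUC.
have : x \in [set u; v] by rewrite uvE set21.
have : y \in [set u; v] by rewrite uvE set22.
have : u \in [set x; y] by rewrite -uvE set21.
have : v \in [set x; y] by rewrite -uvE set22.
rewrite !in_set2 => /orP [] /eqP-> /orP [] /eqP-> //; rewrite ?eqxx ?orbT //= ?orbb.
- by rewrite eq_sym (negbTE xy).
- by rewrite (negbTE xy).
Qed.

Section Graphic.
Variables (T : finType) (e : rel T).
Hypothesis eirr : irreflexive e.
Implicit Types (A B S : {set {set T}}) (x y : T).

Lemma edgesP f : reflect (exists x y, e x y /\ f = [set x; y]) (f \in edges e).
Proof.
apply: (iffP imset2P) => [[x y _] | [x [y [exy ->]]]]; last by exists x y; rewrite ?inE.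
by rewrite inE => exy ->; exists x, y.
Qed.

Lemma edge_neq x y : e x y -> x != y.
Proof. by apply: contraTneq => ->; rewrite eirr. Qed.

Lemma adj_in_sym S : symmetric (adj_in S).
Proof. by move=> u v; rewrite /adj_in setUC. Qed.

Lemma adj_in_setU1 S x y : x != y -> adj_in ([set x; y] |: S) =2 add_edge (adj_in S) x y.
Proof. by move=> xy u v; rewrite /adj_in /add_edge /= in_setU1 set2_eqE // orbC. Qed.

Lemma n_components_adj S : S \subset edges e -> n_components e S = ncomp (adj_in S).
Proof. by move=> /setIidPl SE; rewrite /n_components SE. Qed.

Lemma grank_connectedP (x0 : T) B : B \subset edges e ->
  reflect (forall a b, connect (adj_in B) a b) (grank e B == #|T| - 1).
Proof.
move=> BE; rewrite /grank n_components_adj //.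
have ncomp_gt0 : 0 < ncomp (adj_in B).
  by apply/card_gt0P; exists (comp (adj_in B) x0); apply: imset_f.
have ncomp_le : ncomp (adj_in B) <= #|T| by apply: leq_imset_card.
have -> : (#|T| - ncomp (adj_in B) == #|T| - 1) = (ncomp (adj_in B) == 1).
  move: ncomp_gt0 ncomp_le; move: (ncomp _) => n; lia.
exact: ncomp1P.
Qed.

Definition is_forest B : bool := #|B| + ncomp (adj_in B) == #|T|.

Lemma forest_add_edge B x y : e x y -> ~~ connect (adj_in B) x y ->
  is_forest B -> is_forest ([set x; y] |: B).
Proof.
move=> exy nxy; rewrite /is_forest cardsU1 (eq_ncomp (adj_in_setU1 _ (edge_neq exy))).
have xyB : [set x; y] \notin B by apply: contra nxy => xyB; apply: connect1.
rewrite xyB -(ncomp_add_edge (adj_in_sym B) nxy).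
by rewrite addnA addn1 add1n addSn.
Qed.

Lemma maximal_forest A B0 : B0 \subset A -> is_forest B0 ->
  exists2 B : {set {set T}}, [/\ B0 \subset B, B \subset A & is_forest B] &
    forall x y, e x y -> [set x; y] \in A -> connect (adj_in B) x y.
Proof.
move=> B0A fB0.
pose Phi (B : {set {set T}}) := [&& B0 \subset B, B \subset A & is_forest B].
case: (@arg_maxnP _ B0 Phi (fun B => #|B|)); first by apply/and3P.
move=> B /and3P [B0B BA fB] Bmax; exists B => // x y exy xyA; apply/contraT => nxy.
have xyB : [set x; y] \notin B by apply: contra nxy => xyB; apply: connect1.
suff /Bmax : Phi ([set x; y] |: B) by rewrite cardsU1 xyB add1n /geq /= ltnn.
rewrite /Phi subUset sub1set xyA BA (subset_trans B0B (subsetUr _ _)).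
exact: forest_add_edge.
Qed.

End Graphic.

Section Levels.
Variables (T : finType) (e : rel T) (w : T).
Hypotheses (esym : symmetric e) (eirr : irreflexive e).
Local Notation F := (edges_avoiding e w).
Local Notation nbrs := [set v | e w v].
Implicit Types (N : {set T}) (B : {set {set T}}).

Definition star (N : {set T}) : {set {set T}} := [set [set w; v] | v in N].

Lemma card_star N : #|star N| = #|N|.
Proof. by rewrite card_imset //; apply: set2_inj. Qed.

Lemma star_sub_edges N : N \subset nbrs -> star N \subset edges e.
Proof.
move=> /subsetP Nw; apply/subsetP => _ /imsetP [v vN ->].
by apply/edgesP; exists w, v; split => //; have := Nw v vN; rewrite inE.
Qed.

Lemma forest_star s : uniq s -> {subset s <= nbrs} -> is_forest (star [set:: s]).
Proof.
elim: s => [_ _ | v s IHs /= /andP [vs s_uniq] sw].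
  rewrite /is_forest /star set_nil imset0 cards0 (@ncomp_rel0 _ (adj_in set0)) //.
  by move=> u v; rewrite /adj_in in_set0.
have ewv : e w v by have := sw v (mem_head _ _); rewrite inE.
have v_isolated u : ~~ adj_in (star [set:: s]) v u.
  apply/imsetP => -[u' u's vuE].
  have : v \in [set w; u'] by rewrite -vuE set21.
  rewrite in_set2 => /orP [/eqP vw | /eqP vu']; first by rewrite vw eirr in ewv.
  by rewrite inE in u's; rewrite vu' u's in vs.
rewrite /star set_cons imsetU1; apply: forest_add_edge => //; last first.
  by apply: IHs => // u us; apply: sw; rewrite inE us orbT.
rewrite (sym_connect_sym (@adj_in_sym _ _)).
apply/negP => /connectP [[_ wv | u p /andP [vu _]]].
  by rewrite wv eirr in ewv.
by rewrite (negbTE (v_isolated u)) in vu.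
Qed.

Lemma mem_edges_avoiding x y : e x y -> ([set x; y] \in F) = (x != w) && (y != w).
Proof.
move=> exy; rewrite inE in_set2 negb_or ![w == _]eq_sym andb_idl //.
by move=> _; apply/edgesP; exists x, y.
Qed.

Lemma setD_avoiding_sub_star B : B \subset edges e -> B :\: F \subset star nbrs.
Proof.
move=> BE; apply/subsetP => f /setDP [fB fF].
have /edgesP [x [y [exy fE]]] := subsetP BE f fB; rewrite fE in fF *.
rewrite mem_edges_avoiding // negb_and !negbK in fF.
case/orP: fF => /eqP ?; subst; apply/imsetP; first by exists y; rewrite ?inE.
by exists x; rewrite 1?setUC // inE esym.
Qed.

Lemma connect_star_avoiding N B : N \subset nbrs -> N != set0 -> star N \subset B ->
  induced_connected e (setT :\ w) ->
  (forall x y, e x y -> [set x; y] \in F -> connect (adj_in B) x y) ->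
  forall a b, connect (adj_in B) a b.
Proof.
move=> /subsetP Nw /set0Pn [v0 v0N] starB Gw_conn FB.
have ewv0 : e w v0 by have := Nw v0 v0N; rewrite inE.
have w_to z : connect (adj_in B) w z.
  have wv0 : connect (adj_in B) w v0 by apply/connect1/(subsetP starB)/imset_f.
  have [-> | zw] := eqVneq z w; first exact: connect0.
  apply: connect_trans wv0 _.
  have := Gw_conn v0 z; rewrite !inE eq_sym (edge_neq eirr ewv0) zw => /(_ isT isT).
  apply: connect_sub => u v /and3P [euv]; rewrite !inE !andbT => uw vw.
  by apply: FB; rewrite ?mem_edges_avoiding ?uw.
move=> a b; apply: connect_trans (w_to b).
by rewrite (sym_connect_sym (@adj_in_sym _ B)).
Qed.

Hypothesis G_conn : graph_connected e.
Hypothesis Gw_conn : induced_connected e (setT :\ w).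

Lemma grank_edges : grank e (edges e) = #|T| - 1.
Proof.
apply/eqP/(grank_connectedP w) => // a b.
apply: connect_sub (G_conn (in_setT a) (in_setT b)) => u v /and3P [euv _ _].
by apply/connect1/edgesP; exists u, v.
Qed.

Lemma is_basisP B : reflect
  [/\ B \subset edges e, #|B| = #|T| - 1 & forall a b, connect (adj_in B) a b]
  (is_basis e B).
Proof.
rewrite /is_basis grank_edges.
apply: (iffP idP) => [/andP [/andP [BE /eqP cardB] gB] | [BE cardB Bconn]].
  by split=> //; [rewrite cardB; apply/eqP | apply/(grank_connectedP w BE)].
have /eqP gB : grank e B == #|T| - 1 by apply/(grank_connectedP w BE).
by rewrite BE cardB gB !eqxx.
Qed.

Lemma card_basis_setD_avoiding (z : T) B : z != w -> is_basis e B ->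
  0 < #|B :\: F| <= degree e w.
Proof.
move=> zw /is_basisP [BE _ Bconn]; apply/andP; split.
  case/connectP: (Bconn w z) => [[_ zE | c p /andP [wcB _] _]].
    by rewrite zE eqxx in zw.
  apply/card_gt0P; exists [set w; c]; rewrite in_setD andbC [_ \in B]wcB inE.
  by rewrite set21 andbF.
by rewrite /degree -(card_star nbrs) subset_leq_card // setD_avoiding_sub_star.
Qed.

Lemma exists_basis_star N : N \subset nbrs -> N != set0 ->
  exists2 B, is_basis e B & B :\: F = star N.
Proof.
move=> Nw N0.
have starN : is_forest (star N).
  rewrite -(set_enum N); apply: forest_star; rewrite ?enum_uniq // => v.
  by rewrite mem_enum => /(subsetP Nw).
have [B [NB BA forestB] BF] := maximal_forest eirr (subsetUl (star N) F) starN.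
have Bconn : forall a b, connect (adj_in B) a b.
  apply: connect_star_avoiding Nw N0 NB Gw_conn _ => x y exy xyF.
  by apply: BF; rewrite // in_setU xyF orbT.
have BE : B \subset edges e.
  apply: subset_trans BA _; rewrite subUset star_sub_edges //.
  by apply/subsetP => f; rewrite inE => /andP [].
exists B.
  have /eqP ncompB : ncomp (adj_in B) == 1 by apply/(ncomp1P _ w).
  apply/is_basisP; split=> //.
  by move: forestB; rewrite /is_forest ncompB addn1 => /eqP <-; rewrite subn1.
apply/setP => f; rewrite in_setD; apply/idP/idP => [/andP [fF fB] | fN].
  by have := subsetP BA f fB; rewrite in_setU (negbTE fF) orbF.
rewrite (subsetP NB f fN) andbT.
by case/imsetP: fN => v _ ->; rewrite inE set21 andbF.
Qed.

Lemma degree_le_pred_card : degree e w <= #|T| - 1.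
Proof.
have : nbrs \subset [set~ w] by apply/subsetP => v; rewrite !inE eq_sym; apply: edge_neq.
by move/subset_leq_card; rewrite cardsC1 subn1.
Qed.

Lemma num_levels_edges_avoiding (z : T) : z != w -> num_levels e F = degree e w.
Proof.
move=> zw; set n := #|T| - 1; set d := degree e w.
have levelsE m :
    (m \in [seq #|B :&: F| | B <- enum (is_basis e)]) = (m \in iota (n - d) d).
  rewrite mem_iota subnK ?degree_le_pred_card //.
  apply/mapP/idP => [[B] | /andP [lo hi]].
    rewrite mem_enum => Bbasis ->; have /is_basisP [_ cardB _] := Bbasis.
    have := card_basis_setD_avoiding zw Bbasis; have := cardsID F B.
    rewrite cardB -/n; move: (#|B :&: F|) (#|B :\: F|) => i j; lia.
  have /card_geqP [s [s_uniq size_s sw]] : n - m <= #|nbrs|.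
    by rewrite -/(degree e w); lia.
  have cardN : #|[set:: s]| = n - m by rewrite cardsE -size_s; apply/card_uniqP.
  have Nw : [set:: s] \subset nbrs by apply/subsetP => v; rewrite inE => /sw.
  have N0 : [set:: s] != set0 by rewrite -card_gt0 cardN subn_gt0.
  have [B Bbasis BF] := exists_basis_star Nw N0.
  exists B; first by rewrite mem_enum.
  have /is_basisP [_ cardB _] := Bbasis; have := cardsID F B.
  rewrite BF card_star cardN cardB -/n; move: (#|B :&: F|) => i; lia.
rewrite /num_levels (perm_size (uniq_perm (undup_uniq _) (iota_uniq (n - d) d) _)).
  exact: size_iota.
by move=> m; rewrite mem_undup levelsE.
Qed.

End Levels.

Unset Implicit Arguments.

Theorem proposition5p4 (T : finType) (e : rel T) (w : T) (k : nat) :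
  simple_graph e -> biconnected e ->
  is_flacet e (edges_avoiding e w) ->
  (k_level e (edges_avoiding e w) k <-> degree e w = k).
Proof.
move=> [esym eirr] [G_conn Gw_conn] [/set0Pn [f fF] _ _ _ _].
have /edgesP [x [y [exy fE]]] : f \in edges e by move: fF; rewrite inE => /andP [].
move: fF; rewrite fE (mem_edges_avoiding w exy) => /andP [xw _].
by rewrite /k_level (num_levels_edges_avoiding esym eirr G_conn (Gw_conn w) xw).
Qed.
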